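(* Let $F(x)$ be a formula in prenex form with no free variables other than $x$. If the sentence $\forall xF(x)$ is safe, or the sentence $\exists xF(x)$ is safe, then the sentence $F(c)$ is safe for every object constant $c$.
   Context: Formulas are first-order formulas with object constants, predicate constants and equality, but no function constants of arity $>0$; primitive connectives $\bot,\land,\lor,\rightarrow$, quantifiers $\forall,\exists$; $\neg F$ is $F\rightarrow\bot$, $\top$ is $\bot\rightarrow\bot$. Restricted variables: for quantifier-free $G$, $\mathrm{RV}(G)$ is: $\emptyset$ if $G$ is an equality between two variables; the set of variables of $G$ if $G$ is any other atomic formula; $\mathrm{RV}(\bot)=\emptyset$; $\mathrm{RV}(G\land H)=\mathrm{RV}(G)\cup\mathrm{RV}(H)$; $\mathrm{RV}(G\lor H)=\mathrm{RV}(G)\cap\mathrm{RV}(H)$; $\mathrm{RV}(G\rightarrow H)=\emptyset$. An occurrence of a subformula or variable is positive if the number of implications containing it in their antecedent is even, negative otherwise, and strictly positive if it is in the antecedent of no implication. A prenex sentence $Q_1x_1\cdots Q_nx_nM$ ($M$ quantifier-free, $x_i$ distinct) is semi-safe if every strictly positive occurrence of every $x_i$ in $M$ belongs to a subformula $G\rightarrow H$ with $x_i\in\mathrm{RV}(G)$. Simplification transformations: $\neg\bot\mapsto\top$, $\neg\top\mapsto\bot$; $\bot\land G\mapsto\bot$, $G\land\bot\mapsto\bot$, $\top\land G\mapsto G$, $G\land\top\mapsto G$; $\bot\lor G\mapsto G$, $G\lor\bot\mapsto G$, $\top\lor G\mapsto\top$, $G\lor\top\mapsto\top$; $\bot\rightarrow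 G\mapsto\top$, $G\rightarrow\top\mapsto\top$, $\top\rightarrow G\mapsto G$. A variable $x$ is positively (resp. negatively) weakly restricted in a quantifier-free formula $G$ if the formula obtained from $G$ by first replacing every atomic formula $A$ of $G$ with $x\in\mathrm{RV}(A)$ by $\bot$ and then applying the simplification transformations is $\top$ (resp. $\bot$). A semi-safe prenex sentence $Q_1x_1\cdots Q_nx_nM$ is safe if for every occurrence of every variable $x_i$: (a) if $Q_i=\forall$, the occurrence belongs to a positive subformula (of the sentence) in which $x_i$ is positively weakly restricted, or to a negative subformula in which $x_i$ is negatively weakly restricted; (b) if $Q_i=\exists$, the occurrence belongs to a negative subformula in which $x_i$ is positively weakly restricted, or to a positive subformula in which $x_i$ is negatively weakly restricted. *)

From Stdlib Require Import List Arith Bool.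
Import ListNotations.

(* Variables and object constants are indexed by nat; no function constants. *)
Inductive term : Type :=
  | Var (v : nat)
  | Const (c : nat).

Inductive formula : Type :=
  | FBot
  | FPred (p : nat) (args : list term)
  | FEq (t1 t2 : term)
  | FAnd (G H : formula)
  | FOr (G H : formula)
  | FImp (G H : formula)
  | FAll (x : nat) (G : formula)
  | FEx (x : nat) (G : formula).

Definition FTop : formula := FImp FBot FBot.
Definition FNeg (G : formula) : formula := FImp G FBot.

Definition is_bot (G : formula) : bool :=
  match G with FBot => true | _ => false end.
Definition is_top (G : formula) : bool :=
  match G with FImp FBot FBot => true | _ => false end.

Definition term_has_var (x : nat) (t : term) : bool :=
  match t with Var v => Nat.eqb v x | Const _ => false end.

Definition term_free_in (x : nat) (t : term) : bool := term_has_var x t.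

Fixpoint free_in (y : nat) (F : formula) : bool :=
  match F with
  | FBot => false
  | FPred _ l => existsb (term_free_in y) l
  | FEq t1 t2 => term_free_in y t1 || term_free_in y t2
  | FAnd G H | FOr G H | FImp G H => free_in y G || free_in y H
  | FAll x G | FEx x G => if Nat.eqb x y then false else free_in y G
  end.

Definition subst_term (x c : nat) (t : term) : term :=
  match t with
  | Var v => if Nat.eqb v x then Const c else Var v
  | Const d => Const d
  end.

Fixpoint subst (x c : nat) (F : formula) : formula :=
  match F with
  | FBot => FBot
  | FPred p l => FPred p (map (subst_term x c) l)
  | FEq t1 t2 => FEq (subst_term x c t1) (subst_term x c t2)
  | FAnd G H => FAnd (subst x c G) (subst x c H)
  | FOr G H => FOr (subst x c G) (subst x c H)
  | FImp G H => FImp (subst x c G) (subst x c H)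
  | FAll y G => if Nat.eqb y x then FAll y G else FAll y (subst x c G)
  | FEx y G => if Nat.eqb y x then FEx y G else FEx y (subst x c G)
  end.

Fixpoint is_qf (F : formula) : bool :=
  match F with
  | FBot | FPred _ _ | FEq _ _ => true
  | FAnd G H | FOr G H | FImp G H => is_qf G && is_qf H
  | FAll _ _ | FEx _ _ => false
  end.

Definition is_atom (F : formula) : bool :=
  match F with FPred _ _ | FEq _ _ => true | _ => false end.

Definition atom_terms (F : formula) : list term :=
  match F with
  | FPred _ l => l
  | FEq t1 t2 => [t1; t2]
  | _ => []
  end.

Inductive quant : Type := QAll | QEx.

Definition prenex (qs : list (quant * nat)) (M : formula) : formula :=
  fold_right (fun qx F => match fst qx with
                          | QAll => FAll (snd qx) F
                          | QEx => FEx (snd qx) F end) M qs.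

Definition is_prenex (F : formula) : Prop :=
  exists qs M, F = prenex qs M /\ is_qf M = true.

Definition is_sentence (F : formula) : Prop := forall y, free_in y F = false.

(* x in RV(G), for quantifier-free G *)
Fixpoint rv (x : nat) (G : formula) : bool :=
  match G with
  | FBot => false
  | FEq (Var _) (Var _) => false
  | FEq t1 t2 => term_has_var x t1 || term_has_var x t2
  | FPred _ l => existsb (term_has_var x) l
  | FAnd G H => rv x G || rv x H
  | FOr G H => rv x G && rv x H
  | FImp _ _ => false
  | FAll _ _ | FEx _ _ => false
  end.

(* Exhaustive application of the simplification transformations (bottom-up). *)
Fixpoint simp (G : formula) : formula :=
  match G with
  | FAnd G1 G2 =>
      let a := simp G1 in let b := simp G2 in
      if is_bot a || is_bot b then FBot
      else if is_top a then b
      else if is_top b then a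
      else FAnd a b
  | FOr G1 G2 =>
      let a := simp G1 in let b := simp G2 in
      if is_bot a then b
      else if is_bot b then a
      else if is_top a || is_top b then FTop
      else FOr a b
  | FImp G1 G2 =>
      let a := simp G1 in let b := simp G2 in
      if is_bot a then FTop
      else if is_top b then FTop
      else if is_top a then b
      else FImp a b
  | _ => G
  end.

Fixpoint kill (x : nat) (G : formula) : formula :=
  match G with
  | FPred _ _ | FEq _ _ => if rv x G then FBot else G
  | FAnd G1 G2 => FAnd (kill x G1) (kill x G2)
  | FOr G1 G2 => FOr (kill x G1) (kill x G2)
  | FImp G1 G2 => FImp (kill x G1) (kill x G2)
  | _ => G
  end.

Definition pos_wr (x : nat) (G : formula) : Prop := simp (kill x G) = FTop.
Definition neg_wr (x : nat) (G : formula) : Prop := simp (kill x G) = FBot.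

(* Positions in a quantifier-free formula: paths; false = left, true = right *)
Fixpoint sub (M : formula) (p : list bool) : option formula :=
  match p with
  | [] => Some M
  | b :: p' =>
      match M with
      | FAnd G H | FOr G H | FImp G H => sub (if b then H else G) p'
      | _ => None
      end
  end.

Fixpoint negc (M : formula) (p : list bool) : nat :=
  match p with
  | [] => 0
  | b :: p' =>
      match M with
      | FImp G H => if b then negc H p' else S (negc G p')
      | FAnd G H | FOr G H => negc (if b then H else G) p'
      | _ => 0
      end
  end.

Definition occurs_at (x : nat) (M : formula) (p : list bool) : Prop :=
  exists A, sub M p = Some A /\ is_atom A = true /\ In (Var x) (atom_terms A).

Definition semi_safe_body (qs : list (quant * nat)) (M : formula) : Prop :=
  forall x p, In x (map snd qs) -> occurs_at x M p -> negc M p = 0 ->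
    exists q r G H, p = q ++ r /\ sub M q = Some (FImp G H) /\ rv x G = true.

Definition safe_body (qs : list (quant * nat)) (M : formula) : Prop :=
  forall Q x, In (Q, x) qs -> forall p, occurs_at x M p ->
    exists q r G, p = q ++ r /\ sub M q = Some G /\
      match Q with
      | QAll => (Nat.even (negc M q) = true /\ pos_wr x G) \/
                (Nat.odd (negc M q) = true /\ neg_wr x G)
      | QEx => (Nat.odd (negc M q) = true /\ pos_wr x G) \/
               (Nat.even (negc M q) = true /\ neg_wr x G)
      end.

Definition semi_safe (F : formula) : Prop :=
  exists qs M, F = prenex qs M /\ is_qf M = true /\ NoDup (map snd qs) /\
    is_sentence F /\ semi_safe_body qs M.

Definition safe (F : formula) : Prop :=
  exists qs M, F = prenex qs M /\ is_qf M = true /\ NoDup (map snd qs) /\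
    is_sentence F /\ semi_safe_body qs M /\ safe_body qs M.

(* Substituting a constant c for x changes neither the shape of the matrix nor the
   parity of any position, and it only removes occurrences of x.  For every other
   variable y the atoms containing y are unchanged, except that an equality between
   x and y becomes an equality between y and a constant, so y can only become
   restricted in more atoms.  Weak restriction survives this: simplification, with
   atoms treated as opaque, is monotone in the sense that whenever killing the
   restricted atoms of G simplifies to ⊤ (resp. ⊥), killing more atoms or
   renaming surviving ones still simplifies to ⊤ (resp. ⊥).  So the witnesses of
   safety of Q x F for the variables other than x are witnesses for F(c). *)

From Stdlib Require Import List Arith Bool.
Import ListNotations.

Lemma sub_subst x c p : forall M,
  sub (subst x c M) p = option_map (subst x c) (sub M p).
Proof.
  induction p as [|b p IH]; intros M;
    destruct M as [| | | | | |z G|z G]; simpl; try destruct b; auto;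
    destruct (Nat.eqb z x); reflexivity.
Qed.

Lemma negc_subst x c p : forall M, negc (subst x c M) p = negc M p.
Proof.
  induction p as [|b p IH]; intros M;
    destruct M as [| | | | | |z G|z G]; simpl; try destruct b; auto;
    destruct (Nat.eqb z x); reflexivity.
Qed.

Lemma prenex_subst x c qs M : ~ In x (map snd qs) ->
  subst x c (prenex qs M) = prenex qs (subst x c M).
Proof.
  induction qs as [|[Q z] qs IH]; simpl; intros Hx; [reflexivity|].
  destruct Q; simpl; destruct (Nat.eqb_spec z x) as [<-|_];
    try tauto; rewrite IH by tauto; reflexivity.
Qed.

Lemma qf_subst x c M : is_qf M = true -> is_qf (subst x c M) = true.
Proof.
  induction M; simpl; intros H; try discriminate; auto;
    apply andb_prop in H as [H1 H2]; rewrite IHM1, IHM2; auto.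
Qed.

Lemma subst_term_Var x c t y :
  subst_term x c t = Var y -> t = Var y /\ y <> x.
Proof.
  destruct t as [v|d]; simpl; [|discriminate].
  destruct (Nat.eqb_spec v x); intros [= <-]; auto.
Qed.

Lemma term_has_var_subst x c y t : y <> x ->
  term_has_var y (subst_term x c t) = term_has_var y t.
Proof.
  intros Hyx; destruct t as [v|d]; simpl; [|reflexivity].
  destruct (Nat.eqb_spec v x) as [->|_]; simpl; [|reflexivity].
  symmetry; apply Nat.eqb_neq; congruence.
Qed.

Lemma term_has_var_subst_self x c t : term_has_var x (subst_term x c t) = false.
Proof.
  destruct t as [v|d]; simpl; [|reflexivity].
  destruct (Nat.eqb_spec v x); simpl; [reflexivity|]; apply Nat.eqb_neq; auto.
Qed.

Lemma existsb_has_var_subst x c y l : y <> x ->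
  existsb (term_has_var y) (map (subst_term x c) l) = existsb (term_has_var y) l.
Proof.
  intros Hyx; induction l as [|t l IHl]; simpl; [reflexivity|].
  rewrite term_has_var_subst, IHl; auto.
Qed.

Lemma free_in_subst x c y F : y <> x -> free_in y (subst x c F) = free_in y F.
Proof.
  intros Hyx; induction F as [|p l|t1 t2|G IHG H IHH|G IHG H IHH|G IHG H IHH|z G IHG|z G IHG];
    simpl; unfold term_free_in;
    rewrite ?existsb_has_var_subst, ?term_has_var_subst, ?IHG, ?IHH; auto.
  - destruct (Nat.eqb z x); simpl; rewrite ?IHG; reflexivity.
  - destruct (Nat.eqb z x); simpl; rewrite ?IHG; reflexivity.
Qed.

Lemma free_in_subst_self x c F : free_in x (subst x c F) = false.
Proof.
  induction F as [|p l|t1 t2|G IHG H IHH|G IHG H IHH|G IHG H IHH|z G IHG|z G IHG];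
    simpl; unfold term_free_in; rewrite ?term_has_var_subst_self, ?IHG, ?IHH; auto.
  - induction l as [|t l IHl]; simpl; [reflexivity|].
    rewrite term_has_var_subst_self; auto.
  - destruct (Nat.eqb_spec z x) as [->|_]; simpl; rewrite ?Nat.eqb_refl, ?IHG;
      [reflexivity|destruct (Nat.eqb z x); reflexivity].
  - destruct (Nat.eqb_spec z x) as [->|_]; simpl; rewrite ?Nat.eqb_refl, ?IHG;
      [reflexivity|destruct (Nat.eqb z x); reflexivity].
Qed.

Lemma is_atom_subst x c A : is_atom (subst x c A) = is_atom A.
Proof. destruct A; simpl; try destruct (Nat.eqb _ _); reflexivity. Qed.

Lemma atom_terms_subst x c A : is_atom A = true ->
  atom_terms (subst x c A) = map (subst_term x c) (atom_terms A).
Proof. destruct A; simpl; try discriminate; reflexivity. Qed.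

Lemma occurs_at_subst x c y M p :
  occurs_at y (subst x c M) p -> occurs_at y M p /\ y <> x.
Proof.
  intros (A & HA & Hat & Hin).
  rewrite sub_subst in HA.
  destruct (sub M p) as [B|] eqn:HB; simpl in HA; inversion HA; subst A; clear HA.
  rewrite is_atom_subst in Hat; rewrite atom_terms_subst, in_map_iff in Hin by auto.
  destruct Hin as (t & Ht & Hin); apply subst_term_Var in Ht as [-> Hyx].
  split; [exists B|]; auto.
Qed.

Lemma rv_subst x c y G : y <> x -> rv y G = true -> rv y (subst x c G) = true.
Proof.
  intros Hyx; induction G as [|p l|t1 t2|G IHG H IHH|G IHG H IHH| |z G|z G];
    simpl; intros Hrv; try discriminate.
  - rewrite existsb_has_var_subst; auto.
  - assert (Hv : term_has_var y (subst_term x c t1)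
                 || term_has_var y (subst_term x c t2) = true)
      by (rewrite !term_has_var_subst by auto; destruct t1, t2; easy).
    destruct (subst_term x c t1) as [v1|d1] eqn:E1,
             (subst_term x c t2) as [v2|d2] eqn:E2; try exact Hv.
    apply subst_term_Var in E1 as [-> _], E2 as [-> _]; discriminate.
  - apply orb_true_iff in Hrv as [Hrv|Hrv]; apply orb_true_iff; auto.
  - apply andb_true_iff in Hrv as [Hrv1 Hrv2]; apply andb_true_iff; auto.
Qed.

Definition refines (a a' : formula) : Prop :=
  (a = FTop -> a' = FTop) /\ (a = FBot -> a' = FBot).

(* The clauses of [simp]: [simp (FAnd G H)] is convertible to
   [simp_and (simp G) (simp H)], and likewise for [FOr] and [FImp]. *)
Definition simp_and (a b : formula) : formula :=
  if is_bot a || is_bot b then FBot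
  else if is_top a then b
  else if is_top b then a
  else FAnd a b.

Definition simp_or (a b : formula) : formula :=
  if is_bot a then b
  else if is_bot b then a
  else if is_top a || is_top b then FTop
  else FOr a b.

Definition simp_imp (a b : formula) : formula :=
  if is_bot a then FTop
  else if is_top b then FTop
  else if is_top a then b
  else FImp a b.

Lemma bot_top_cases f :
  f = FBot \/ f = FTop \/
  (is_bot f = false /\ is_top f = false /\ f <> FBot /\ f <> FTop).
Proof.
  destruct f as [| | | | |[| | | | | | |] [| | | | | | |] | |]; simpl;
    first [now left | now (right; left) | right; right; repeat split; discriminate].
Qed.

Ltac case_bot_top f :=
  let Hb := fresh in let Ht := fresh in
  destruct (bot_top_cases f) as [->|[->|(Hb & Ht & ? & ?)]]; rewrite ?Hb, ?Ht.

Ltac refines_by_cases a b a' b' :=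
  intros [? ?] [? ?];
  case_bot_top a; case_bot_top b; case_bot_top a'; case_bot_top b';
  unfold refines, FTop in *; simpl;
  split; intros; firstorder congruence.

Lemma refines_simp_and a b a' b' : refines a a' -> refines b b' ->
  refines (simp_and a b) (simp_and a' b').
Proof. unfold simp_and; refines_by_cases a b a' b'. Qed.

Lemma refines_simp_or a b a' b' : refines a a' -> refines b b' ->
  refines (simp_or a b) (simp_or a' b').
Proof. unfold simp_or; refines_by_cases a b a' b'. Qed.

Lemma refines_simp_imp a b a' b' : refines a a' -> refines b b' ->
  refines (simp_imp a b) (simp_imp a' b').
Proof. unfold simp_imp; refines_by_cases a b a' b'. Qed.

Lemma kill_atom y A : is_atom A = true -> kill y A = if rv y A then FBot else A.
Proof. destruct A; simpl; try discriminate; reflexivity. Qed.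

Lemma refines_kill_subst x c y G : y <> x ->
  refines (simp (kill y G)) (simp (kill y (subst x c G))).
Proof.
  intros Hyx; induction G as [|p l|t1 t2|G IHG H IHH|G IHG H IHH|G IHG H IHH|z G|z G].
  2, 3: rewrite !kill_atom by (rewrite ?is_atom_subst; reflexivity);
    destruct (rv y _) eqn:Hrv at 1;
    [rewrite (rv_subst x c y _ Hyx Hrv); split; auto | split; discriminate].
  - split; auto.
  - exact (refines_simp_and _ _ _ _ IHG IHH).
  - exact (refines_simp_or _ _ _ _ IHG IHH).
  - exact (refines_simp_imp _ _ _ _ IHG IHH).
  - split; discriminate.
  - split; discriminate.
Qed.

Lemma semi_safe_body_subst Q x c qs M :
  semi_safe_body ((Q, x) :: qs) M -> semi_safe_body qs (subst x c M).
Proof.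
  intros Hss y p Hy Hocc Hneg.
  apply occurs_at_subst in Hocc as [Hocc Hyx].
  rewrite negc_subst in Hneg.
  destruct (Hss y p (or_intror Hy) Hocc Hneg) as (q & r & G & H & -> & Hq & Hrv).
  exists q, r, (subst x c G), (subst x c H).
  rewrite sub_subst, Hq; auto using rv_subst.
Qed.

Lemma safe_body_subst Q x c qs M :
  safe_body ((Q, x) :: qs) M -> safe_body qs (subst x c M).
Proof.
  intros Hsb Q' y Hy p Hocc.
  apply occurs_at_subst in Hocc as [Hocc Hyx].
  destruct (Hsb Q' y (or_intror Hy) p Hocc) as (q & r & G & -> & Hq & HG).
  exists q, r, (subst x c G).
  rewrite sub_subst, Hq, negc_subst.
  destruct (refines_kill_subst x c y G Hyx) as [Htop Hbot].
  unfold pos_wr, neg_wr in *.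
  destruct Q'; intuition auto.
Qed.

Lemma is_sentence_subst x c F :
  (forall y, y <> x -> free_in y F = false) -> is_sentence (subst x c F).
Proof.
  intros HF y; destruct (Nat.eq_dec y x) as [->|Hyx].
  - apply free_in_subst_self.
  - rewrite free_in_subst; auto.
Qed.

Lemma safe_quantified_inv Q x F : safe (prenex [(Q, x)] F) ->
  exists qs M, F = prenex qs M /\ is_qf M = true /\ NoDup (x :: map snd qs) /\
    (forall y, y <> x -> free_in y F = false) /\
    semi_safe_body ((Q, x) :: qs) M /\ safe_body ((Q, x) :: qs) M.
Proof.
  intros (qs0 & M & Heq & Hqf & Hnd & Hsent & Hss & Hsb).
  destruct qs0 as [|[Q' z] qs].
  - simpl in Heq; subst M; destruct Q; discriminate.
  - assert (Q' = Q /\ z = x /\ F = prenex qs M) as (-> & -> & ->)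
      by (destruct Q, Q'; inversion Heq; auto).
    exists qs, M; repeat split; auto.
    intros y Hyx; specialize (Hsent y).
    destruct Q; simpl in Hsent; rewrite (proj2 (Nat.eqb_neq x y)) in Hsent; auto.
Qed.

Theorem lemma5 (F : formula) (x : nat) :
  is_prenex F ->
  (forall y, free_in y F = true -> y = x) ->
  (safe (FAll x F) \/ safe (FEx x F)) ->
  forall c : nat, safe (subst x c F).
Proof.
  (* The first two hypotheses already follow from the safety of the quantified sentence. *)
  intros _ _ Hsafe c.
  assert (HQ : exists Q, safe (prenex [(Q, x)] F))
    by (destruct Hsafe; [exists QAll | exists QEx]; assumption).
  destruct HQ as [Q HQ].
  destruct (safe_quantified_inv Q x F HQ)
    as (qs & M & -> & Hqf & Hnd & Hfree & Hss & Hsb).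
  apply NoDup_cons_iff in Hnd as [Hx Hnd].
  exists qs, (subst x c M); repeat split.
  - apply prenex_subst; exact Hx.
  - apply qf_subst; exact Hqf.
  - exact Hnd.
  - apply is_sentence_subst; exact Hfree.
  - apply (semi_safe_body_subst Q); exact Hss.
  - apply (safe_body_subst Q); exact Hsb.
Qed.
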